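(* Let $T$ be a subset of $\mathbb{N}_0^d$ whose affine span has dimension $1$. Then the $1$-completion of $T$ equals $\Lambda(T)\cap\mathbb{N}_0^d$.
   Context: $\mathbb{N}_0=\{0,1,2,\dots\}$. For nonempty $\Gamma\subseteq\mathbb{N}_0^d$, $\Lambda(\Gamma)$ is the coset in $\mathbb{Z}^d$ generated by $\Gamma$ (smallest coset of a subgroup of $\mathbb{Z}^d$ containing $\Gamma$); each $\lambda\in\Lambda(\Gamma)$ can be written $\lambda=\gamma+\sum_{\alpha\in\Gamma,\alpha\neq\gamma}m_{\gamma,\alpha}(\alpha-\gamma)$ with $\gamma\in\Gamma$ and integers $m_{\gamma,\alpha}$, finitely many nonzero. $d(\Gamma,\lambda)$ is the infimum over all such representations of $\max\big(\sum_{m_{\gamma,\alpha}>0}m_{\gamma,\alpha},-\sum_{m_{\gamma,\alpha}<0}m_{\gamma,\alpha}\big)$, and $E_n(\Gamma)=\{\lambda\in\Lambda(\Gamma)\cap\mathbb{N}_0^d:d(\Gamma,\lambda)\leq n\}$. Set $E_n^1(T)=E_n(T)$, $E_n^{k+1}(T)=E_n(E_n^k(T))$, and the $n$-completion $E_n^\infty(T)=\bigcup_{k\geq1}E_n^k(T)$. *)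

From HB Require Import structures.
From mathcomp Require Import all_boot all_order all_algebra.
Set Implicit Arguments. Unset Strict Implicit. Unset Printing Implicit Defensive.
Import Order.TTheory GRing.Theory Num.Theory.
Local Open Scope ring_scope.

Definition pt (d : nat) := 'rV[int]_d.

Definition nonneg {d} (x : pt d) : Prop := forall i, 0 <= x 0 i.

Definition is_subgroup {d} (H : pt d -> Prop) : Prop :=
  H 0 /\ (forall x y, H x -> H y -> H (x - y)).

(* Lambda(G): the smallest coset v + H of a subgroup H of Z^d containing G
   (intersection of all such cosets). *)
Definition Lam {d} (G : pt d -> Prop) (l : pt d) : Prop :=
  forall (H : pt d -> Prop) (v : pt d), is_subgroup H ->
    (forall g, G g -> H (g - v)) -> H (l - v).

(* A representation l = g + sum_{a in G, a <> g} m_a (a - g), with finitely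
   many nonzero m_a, all nonzero indices listed in the duplicate-free list s. *)
Definition rep {d} (G : pt d -> Prop) (l g : pt d) (m : pt d -> int)
  (s : seq (pt d)) : Prop :=
  [/\ G g, uniq s, (forall a, a \in s -> G a /\ a != g),
      (forall a, a \notin s -> m a = 0) &
      l = g + \sum_(a <- s) ((a - g) *~ m a)].

Definition rep_cost {d} (m : pt d -> int) (s : seq (pt d)) : int :=
  Num.max (\sum_(a <- s | 0 < m a) m a) (\sum_(a <- s | m a < 0) (- m a)).

(* d(G, l) <= n : the infimum (over nonnegative integers, +oo if no
   representation) is <= n iff some representation has cost <= n. *)
Definition dist_le {d} (G : pt d -> Prop) (l : pt d) (n : nat) : Prop :=
  exists g m s, rep G l g m s /\ rep_cost m s <= n%:Z.

Definition En {d} (n : nat) (G : pt d -> Prop) (l : pt d) : Prop :=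
  [/\ Lam G l, nonneg l & dist_le G l n].

(* Eiter n k T = E_n^{k+1}(T) *)
Fixpoint Eiter {d} (n k : nat) (T : pt d -> Prop) : pt d -> Prop :=
  match k with
  | 0 => En n T
  | k'.+1 => En n (Eiter n k' T)
  end.

(* n-completion E_n^oo(T) = union over k >= 1 of E_n^k(T) *)
Definition Einf {d} (n : nat) (T : pt d -> Prop) (l : pt d) : Prop :=
  exists k, Eiter n k T l.

Definition ratv {d} (x : pt d) : 'rV[rat]_d := map_mx (fun z : int => z%:~R) x.

(* The affine span (over Q, equivalently R) of T has dimension 1:
   T is contained in a line x0 + Q v (v <> 0) through a point x0 of T,
   and T contains a point other than x0 (so its affine span is not a point). *)
Definition affdim1 {d} (T : pt d -> Prop) : Prop :=
  exists (x0 : pt d) (v : 'rV[rat]_d),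
    [/\ T x0, v != 0,
        (forall t, T t -> exists c : rat, ratv (t - x0) = c *: v) &
        (exists t, T t /\ t != x0)].

From mathcomp Require Import all_boot all_order all_algebra.
From mathcomp Require Import zify ring.
From Stdlib Require Import Classical.
Set Implicit Arguments. Unset Strict Implicit. Unset Printing Implicit Defensive.
Import Order.TTheory GRing.Theory Num.Theory.
Local Open Scope ring_scope.

(* Write S for the 1-completion of T.  Since E_1(G) contains a + c - b for all
   a, b, c in G as soon as it is nonnegative, S is closed under this
   parallelogram move; S also contains T and lies in Lam(T), hence on the
   rational line through T.  Iterating the move walks arithmetic progressions,
   and the nonnegative points of a line form a convex set, so S contains every
   nonnegative point a + k (b - a) (k in Z) for a, b in S.  Choose s, s' in S
   whose i-th coordinates differ by the least positive amount: Euclidean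
   division of the i-th coordinate shows S is contained in s + Z (s' - s).
   This coset then contains Lam(T), and each of its nonnegative points lies in
   S by the progression property. *)

Ltac mx_ring := apply/matrixP => ? ?; rewrite !mxE; ring.

Section Completion.
Variable d : nat.
Implicit Types (G T : pt d -> Prop) (a b c g l x : pt d).

Lemma mem_Lam G g : G g -> Lam G g.
Proof. by move=> Gg H v _; apply. Qed.

Lemma Lam_trans G T l : (forall g, G g -> Lam T g) -> Lam G l -> Lam T l.
Proof. by move=> GT Gl H v Hsub TH; apply: Gl => // g /GT; apply. Qed.

Lemma Lam_parallelogram G a b c : G a -> G b -> G c -> Lam G (a + c - b).
Proof.
move=> Ga Gb Gc H v [_ H_sub] GH.
have -> : a + c - b - v = (a - v) - ((b - v) - (c - v)) by mx_ring.
by apply: (H_sub); [|apply: (H_sub)]; apply: GH.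
Qed.

Definition int_multiple (w : pt d) y := exists k : int, y = k *: w.

Lemma is_subgroup_int_multiple w : is_subgroup (int_multiple w).
Proof.
split; first by exists 0; rewrite scale0r.
by move=> _ _ [k ->] [k' ->]; exists (k - k'); rewrite scalerBl.
Qed.

Lemma dist_le_mem G g n : G g -> dist_le G g n.
Proof.
move=> Gg; exists g, (fun _ => 0), [::]; split.
  by split => //; rewrite big_nil addr0.
by rewrite /rep_cost !big_nil maxxx.
Qed.

Lemma dist_le_parallelogram G a b c n :
  (0 < n)%N -> G a -> G b -> G c -> dist_le G (a + c - b) n.
Proof.
move=> n_gt0 Ga Gb Gc.
have [<-|nab] := eqVneq a b; first by rewrite addrAC subrr add0r; exact: dist_le_mem.
have [->|ncb] := eqVneq c b; first by rewrite addrK; exact: dist_le_mem.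
have [<-|nac] := eqVneq a c.
  exists a, (fun y => if y == b then -1 else 0), [:: b]; split.
    split => //.
    - by move=> y; rewrite inE => /eqP ->; rewrite eq_sym.
    - by move=> y; rewrite inE => /negbTE ->.
    by rewrite big_cons big_nil eqxx addr0; mx_ring.
  by rewrite /rep_cost !big_cons !big_nil eqxx /=; lia.
exists c, (fun y => if y == a then 1 else if y == b then -1 else 0), [:: a; b].
have nba : (b == a) = false by rewrite eq_sym (negbTE nab).
split.
  split => //.
  - by rewrite /= inE nab.
  - by move=> y; rewrite !inE => /orP [] /eqP ->; split => //; rewrite eq_sym.
  - by move=> y; rewrite !inE negb_or => /andP [/negbTE -> /negbTE ->].
  by rewrite !big_cons big_nil eqxx nba eqxx addr0; mx_ring.
by rewrite /rep_cost !big_cons !big_nil eqxx nba eqxx /=; lia.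
Qed.

Lemma mem_En G n x : (forall y, G y -> nonneg y) -> G x -> En n G x.
Proof.
by move=> G_nonneg Gx; split; [exact: mem_Lam|exact: G_nonneg|exact: dist_le_mem].
Qed.

Lemma En_parallelogram G n a b c : (0 < n)%N ->
  G a -> G b -> G c -> nonneg (a + c - b) -> En n G (a + c - b).
Proof.
by move=> n_gt0 Ga Gb Gc abc_ge0; split; [exact: Lam_parallelogram|
  |exact: dist_le_parallelogram].
Qed.

Lemma Eiter_Lam_nonneg n k T l : Eiter n k T l -> Lam T l /\ nonneg l.
Proof.
elim: k l => [|k IH] l /=; first by case.
by case=> Ll l_ge0 _; split => //; apply: Lam_trans Ll => g /IH [].
Qed.

Lemma Eiter_mono n k k' T x : (forall y, T y -> nonneg y) ->
  (k <= k')%N -> Eiter n k T x -> Eiter n k' T x.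
Proof.
move=> T_nonneg /subnKC <-; elim: (k' - k)%N => [|j IH]; first by rewrite addn0.
by move=> /IH Ex; rewrite addnS; apply: mem_En Ex => y /Eiter_Lam_nonneg [].
Qed.

Lemma mem_Einf n T x : (forall y, T y -> nonneg y) -> T x -> Einf n T x.
Proof. by move=> T_nonneg Tx; exists 0%N; exact: mem_En. Qed.

Lemma Einf_Lam_nonneg n T l : Einf n T l -> Lam T l /\ nonneg l.
Proof. by case=> k /Eiter_Lam_nonneg. Qed.

Definition parallelogram_closed (S : pt d -> Prop) :=
  forall x y z, S x -> S y -> S z -> nonneg (x + z - y) -> S (x + z - y).

Lemma Einf_parallelogram_closed n T : (0 < n)%N ->
  (forall y, T y -> nonneg y) -> parallelogram_closed (Einf n T).
Proof.
move=> n_gt0 T_nonneg x y z [kx Ex] [ky Ey] [kz Ez] xyz_ge0.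
pose K := maxn kx (maxn ky kz); exists K.+1.
have lift k w : (k <= K)%N -> Eiter n k T w -> Eiter n K T w := Eiter_mono T_nonneg.
by apply: En_parallelogram => //; [apply: (lift kx)|apply: (lift ky)|apply: (lift kz)];
  rewrite // /K; lia.
Qed.

Lemma scale_norm_same_sign (D M : int) (X Y : pt d) : D != 0 -> 0 <= M * D ->
  D *: X = M *: Y -> `|D| *: X = `|M| *: Y.
Proof.
case: (ltrgtP D 0) => [D_lt0|D_gt0|->]; rewrite ?eqxx // => _.
- by rewrite ltr0_norm // nmulr_lge0 // => /ler0_norm ->; rewrite !scaleNr => ->.
- by rewrite gtr0_norm // pmulr_lge0 // => /ger0_norm ->.
Qed.

Lemma nonneg_convex (m k : int) a b x : 0 <= m -> 0 <= k -> 0 < m + k ->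
  (m + k) *: x = k *: a + m *: b -> nonneg a -> nonneg b -> nonneg x.
Proof.
move=> m_ge0 k_ge0 mk_gt0 /matrixP E a_ge0 b_ge0 j.
have : 0 <= (m + k) * x 0 j.
  by move: (E 0 j); rewrite !mxE => ->; rewrite addr_ge0 ?mulr_ge0.
by rewrite pmulr_rge0.
Qed.

Section ParallelogramClosed.
Variable S : pt d -> Prop.
Hypothesis S_closed : parallelogram_closed S.
Hypothesis S_nonneg : forall x, S x -> nonneg x.

Lemma progression_closed a b (n : nat) : S a -> S b ->
  nonneg (a + n%:Z *: (b - a)) -> S (a + n%:Z *: (b - a)).
Proof.
move=> Sa Sb n_ge0; pose P (k : nat) := a + k%:Z *: (b - a).
have P_ge0 k : (k <= n)%N -> nonneg (P k).
  case: k => [|k] kn; first by rewrite /P scale0r addr0; exact: S_nonneg.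
  apply: (@nonneg_convex k.+1 (n - k.+1)%N a (P n)) => //; last exact: S_nonneg.
  by move: (n - k.+1)%N (subnKC kn) => j <-; rewrite /P PoszD; mx_ring.
have P_in k : (k < n)%N -> S (P k) /\ S (P k.+1).
  elim: k => [|k IH] kn; first by rewrite /P scale0r scale1r addr0 addrC subrK.
  have [SPk SPk1] := IH (ltnW kn); split => //.
  have E : P k.+2 = P k.+1 + P k.+1 - P k by rewrite /P; mx_ring.
  by rewrite E; apply: S_closed => //; rewrite -E; apply: P_ge0.
by case: n => [|n] in n_ge0 P_ge0 P_in *; [rewrite scale0r addr0|case: (P_in n)].
Qed.

Lemma line_closed a b (k : int) : S a -> S b ->
  nonneg (a + k *: (b - a)) -> S (a + k *: (b - a)).
Proof.
move=> Sa Sb; case: k => n; first exact: progression_closed.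
have -> : a + Negz n *: (b - a) = b + n.+2%:Z *: (a - b) by rewrite NegzE; mx_ring.
exact: progression_closed.
Qed.

Hypothesis S_collinear : forall i s s' t, S s -> S s' -> S t ->
  (s' 0 i - s 0 i) *: (t - s) = (t 0 i - s 0 i) *: (s' - s).

Definition minimal_gap i s s' :=
  [/\ S s, S s', s' 0 i != s 0 i &
      forall p q, S p -> S q -> p 0 i != q 0 i ->
        `|s' 0 i - s 0 i| <= `|p 0 i - q 0 i|].

Lemma minimal_gapC i s s' : minimal_gap i s s' -> minimal_gap i s' s.
Proof. by case=> Ss Ss' neq gap_min; split; rewrite 1?eq_sym // distrC. Qed.

Lemma exists_minimal_gap i p q : S p -> S q -> p 0 i != q 0 i ->
  exists s s', minimal_gap i s s'.
Proof.
have [n] := ubnP (absz (p 0 i - q 0 i)%R).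
elim: n p q => // n IH p q pq_lt Sp Sq pq_neq.
have [[p' [q' [Sp' Sq' pq_neq' pq_lt']]]|no_smaller] := classic
  (exists p' q', [/\ S p', S q', p' 0 i != q' 0 i &
                    `|p' 0 i - q' 0 i| < `|p 0 i - q 0 i|]).
  by apply: (IH p' q') => //; move: pq_lt'; rewrite -!abszE; lia.
exists q, p; split => // p' q' Sp' Sq' pq_neq'; rewrite leNgt; apply/negP => lt.
by apply: no_smaller; exists p', q'.
Qed.

Lemma minimal_gap_same_side i s s' t : minimal_gap i s s' -> S t ->
  0 <= (t 0 i - s 0 i) * (s' 0 i - s 0 i) -> exists k : int, t = s + k *: (s' - s).
Proof.
case=> Ss Ss' gap_neq gap_min St same_side.
set D := s' 0 i - s 0 i in same_side gap_min; set M := t 0 i - s 0 i in same_side.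
have D_neq0 : D != 0 by rewrite subr_eq0.
have E := scale_norm_same_sign D_neq0 same_side (S_collinear i Ss Ss' St).
set del := `|D| in E gap_min; set N := `|M| in E.
have del_neq0 : del != 0 by rewrite normr_eq0.
have Ej j : del * (t 0 j - s 0 j) = N * (s' 0 j - s 0 j).
  by move/matrixP: E => /(_ 0 j); rewrite !mxE.
set q := (N %/ del)%Z; set r := (N %% del)%Z.
have N_eq : N = q * del + r := divz_eq N del.
have r_ge0 : 0 <= r := modz_ge0 N del_neq0.
have r_lt : r < del by rewrite -[X in _ < X]normr_id ltz_mod.
have q_ge0 : 0 <= q by rewrite divz_ge0 ?normr_gt0.
(* p lies between s and t on the line, so it is nonnegative and hence in S;
   its i-th distance to t is the remainder r < del, forcing r = 0. *)
set p := s + q *: (s' - s).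
have E2 j : del * (t 0 j - p 0 j) = r * (s' 0 j - s 0 j).
  have -> : del * (t 0 j - p 0 j) = del * (t 0 j - s 0 j) - q * del * (s' 0 j - s 0 j).
    by rewrite /p !mxE; ring.
  by rewrite Ej N_eq; ring.
have [r0|r_gt0] := eqVneq r 0.
  exists q; apply/matrixP => o j; rewrite ord1; apply/eqP; rewrite -subr_eq0.
  by move: (E2 j); rewrite r0 mul0r => /eqP; rewrite mulf_eq0 (negbTE del_neq0).
have p_ge0 : nonneg p.
  have qdel_ge0 : 0 <= q * del by rewrite mulr_ge0.
  have r_pos : 0 < r by rewrite lt0r r_gt0.
  apply: (@nonneg_convex (q * del) r s t) => //; first by rewrite ltr_wpDl.
  - apply/matrixP => o j; rewrite ord1 !mxE.
    have -> : (q * del + r) * (s 0 j + q * (s' 0 j - s 0 j)) =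
        (q * del + r) * s 0 j + q * ((q * del + r) * (s' 0 j - s 0 j)) by ring.
    by rewrite -N_eq -Ej N_eq; ring.
  - exact: S_nonneg.
  - exact: S_nonneg.
have Sp : S p := line_closed Ss Ss' p_ge0.
have tp_dist : `|t 0 i - p 0 i| = r.
  apply: (mulfI del_neq0); have := congr1 Num.norm (E2 i).
  by rewrite !normrM (ger0_norm r_ge0) normr_id => ->; rewrite mulrC.
have tp_neq : t 0 i != p 0 i by rewrite -subr_eq0 -normr_eq0 tp_dist.
by have := gap_min t p St Sp tp_neq; rewrite tp_dist leNgt r_lt.
Qed.

Lemma minimal_gap_lattice i s s' t : minimal_gap i s s' -> S t ->
  exists k : int, t = s + k *: (s' - s).
Proof.
move=> gap St.
have [same_side|opposite_side] := lerP 0 ((t 0 i - s 0 i) * (s' 0 i - s 0 i)).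
  exact: minimal_gap_same_side gap St same_side.
have [|k ->] := minimal_gap_same_side (minimal_gapC gap) St.
  have -> : (t 0 i - s' 0 i) * (s 0 i - s' 0 i) =
      (s' 0 i - s 0 i) ^+ 2 - (t 0 i - s 0 i) * (s' 0 i - s 0 i) by ring.
  by rewrite subr_ge0 (le_trans (ltW opposite_side)) ?sqr_ge0.
by exists (1 - k); mx_ring.
Qed.

End ParallelogramClosed.

Definition rat_multiple (v : 'rV[rat]_d) y := exists c : rat, ratv y = c *: v.

Lemma is_subgroup_rat_multiple v : is_subgroup (rat_multiple v).
Proof.
split; first by exists 0; apply/matrixP => ? ?; rewrite scale0r !mxE.
move=> y y' [c /matrixP E] [c' /matrixP E']; exists (c - c').
apply/matrixP => i j; move: (E i j) (E' i j); rewrite !mxE intrB => -> ->.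
by rewrite mulrBl.
Qed.

Lemma rat_multiple_collinear x0 v i s s' t : rat_multiple v (s - x0) ->
  rat_multiple v (s' - x0) -> rat_multiple v (t - x0) ->
  (s' 0 i - s 0 i) *: (t - s) = (t 0 i - s 0 i) *: (s' - s).
Proof.
have coordE y (c : rat) : ratv (y - x0) = c *: v ->
    forall j, (y 0 j)%:~R = (x0 0 j)%:~R + c * v 0 j.
  by move=> /matrixP E j; move: (E 0 j); rewrite !mxE intrB => <-; ring.
move=> [cs /coordE Es] [cs' /coordE Es'] [ct /coordE Et].
apply/matrixP => o j; rewrite ord1 !mxE; apply: (@intr_inj rat).
by rewrite !intrM !intrB !Es !Es' !Et; ring.
Qed.

End Completion.

Theorem lemma3p2 (d : nat) (T : pt d -> Prop) :
  (forall t, T t -> nonneg t) -> affdim1 T ->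
  forall l : pt d, Einf 1 T l <-> (Lam T l /\ nonneg l).
Proof.
move=> T_nonneg [x0 [v [Tx0 _ T_line [t [Tt t_neq]]]]] l.
split; first exact: Einf_Lam_nonneg.
case=> Ll l_ge0; pose S := Einf 1 T.
have S_nonneg x : S x -> nonneg x by case/Einf_Lam_nonneg.
have ST x : T x -> S x := mem_Einf 1 T_nonneg.
have S_closed : parallelogram_closed S :=
  Einf_parallelogram_closed (n := 1) isT T_nonneg.
have S_collinear i s s' t' : S s -> S s' -> S t' ->
    (s' 0 i - s 0 i) *: (t' - s) = (t' 0 i - s 0 i) *: (s' - s).
  have S_line x : S x -> rat_multiple v (x - x0).
    by case/Einf_Lam_nonneg => Lx _; apply: Lx (is_subgroup_rat_multiple v) T_line.
  by move=> /S_line Ls /S_line Ls' /S_line Lt; exact: rat_multiple_collinear Ls Ls' Lt.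
have [i ti_neq] : exists i, t 0 i != x0 0 i.
  have /rV0Pn [i] : t - x0 != 0 by rewrite subr_eq0.
  by rewrite !mxE subr_eq0; exists i.
have [s [s' gap]] := exists_minimal_gap (ST t Tt) (ST x0 Tx0) ti_neq.
have [k Ek] : int_multiple (s' - s) (l - s).
  apply: Ll (is_subgroup_int_multiple _) _ => g /ST Sg.
  have [k ->] := minimal_gap_lattice S_closed S_nonneg S_collinear gap Sg.
  by exists k; rewrite addrC addKr.
have El : l = s + k *: (s' - s) by rewrite -Ek addrC subrK.
by case: gap => Ss Ss' _ _; rewrite El in l_ge0 *; exact: line_closed.
Qed.
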